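(* Let $A,M\in\mathbb{R}^{n\times n}$ with $M$ nonsingular, $B\in\mathbb{R}^{n\times r}$, $j_{\max}\ge1$, shifts $\alpha_1,\ldots,\alpha_{j_{\max}}\in\mathbb{C}$ with $\mathrm{Re}(\alpha_k)<0$ and $A+\alpha_kM$ nonsingular, and $0<\varepsilon<1$. Run the inexact LR-ADI iteration of the context for $j_{\max}$ steps, and set $\sigma_k:=\|M(A+\alpha_kM)^{-1}\|$. (a) If for all $1\le k\le j_{\max}$ $$\|s_k\|\le\tfrac12\Big(\sqrt{\|w_{k-1}\|^2+\tfrac{2\varepsilon}{\sigma_k\gamma_k^2j_{\max}}}-\|w_{k-1}\|\Big),$$ then $\|\Delta\mathcal{R}_{j_{\max}}\|\le\varepsilon$. (b) If for all $1\le k\le j_{\max}$ $$\|s_k\|\le\tfrac12\Big(\sqrt{\|w_{k-1}\|^2+\Big(\tfrac{k\varepsilon}{j_{\max}}-2\|\eta_{k-1}\|\Big)\tfrac{2}{\sigma_k\gamma_k^2}}-\|w_{k-1}\|\Big),$$ then $\|\Delta\mathcal{R}_{j_{\max}}\|\le\varepsilon$.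
   Context: Inexact LR-ADI iteration: $w_0:=B$, $\gamma_k:=\sqrt{-2\,\mathrm{Re}(\alpha_k)}$; for $k\ge1$, $v_k\in\mathbb{C}^{n\times r}$ is an arbitrary approximate solution of $(A+\alpha_kM)v=w_{k-1}$ with residual $s_k:=w_{k-1}-(A+\alpha_kM)v_k$, $w_k:=w_{k-1}+\gamma_k^2Mv_k$, $Z_k:=[\gamma_1v_1,\ldots,\gamma_kv_k]$, $S_k:=[s_1,\ldots,s_k]$, $\Gamma_k:=\mathrm{diag}(\gamma_1,\ldots,\gamma_k)\otimes I_r$. True residual $\mathcal{R}^{\mathrm{true}}_k:=AZ_kZ_k^*M^*+MZ_kZ_k^*A^*+BB^*$, computed residual $\mathcal{R}^{\mathrm{comp}}_k:=w_kw_k^*$, residual gap $\Delta\mathcal{R}_k:=\mathcal{R}^{\mathrm{true}}_k-\mathcal{R}^{\mathrm{comp}}_k$, and $\eta_k:=-S_k\Gamma_kZ_k^*M^*$ for $k\ge1$, $\eta_0:=0$. Norms are spectral. *)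

From HB Require Import structures.
From mathcomp Require Import all_boot all_order all_algebra.
From mathcomp Require Import complex.
From mathcomp Require Import reals classical_sets.
Set Implicit Arguments. Unset Strict Implicit. Unset Printing Implicit Defensive.
Import Order.TTheory GRing.Theory Num.Theory.
Local Open Scope ring_scope.
Local Open Scope classical_set_scope.

Section LRADI.
Variable R : realType.
Local Notation C := (R[i]).

Definition cabs2 (z : C) : R := complex.Re z ^+ 2 + complex.Im z ^+ 2.

Definition vnorm p (u : 'cV[C]_p) : R := Num.sqrt (\sum_i cabs2 (u i 0)).

Definition snorm m p (X : 'M[C]_(m, p)) : R :=
  sup [set vnorm (X *m u) | u in [set u : 'cV[C]_p | vnorm u <= 1]].

Definition ctr m p (X : 'M[C]_(m, p)) : 'M[C]_(p, m) :=
  (map_mx (fun z : C => complex.Complex (complex.Re z) (- complex.Im z)) X)^T.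

Definition cmx m p (X : 'M[R]_(m, p)) : 'M[C]_(m, p) :=
  map_mx (fun x : R => x%:C%C) X.

Variables (n r : nat) (A M : 'M[R]_n) (B : 'M[R]_(n, r)) (alpha : nat -> C)
  (v : nat -> 'M[C]_(n, r)).

Definition gam (k : nat) : R := Num.sqrt (- 2 * complex.Re (alpha k)).

Definition shifted (k : nat) : 'M[C]_n := cmx A + alpha k *: cmx M.

Fixpoint w (k : nat) : 'M[C]_(n, r) :=
  match k with
  | 0 => cmx B
  | k'.+1 => w k' + ((gam k) ^+ 2)%:C%C *: (cmx M *m v k)
  end.

Definition s (k : nat) : 'M[C]_(n, r) := w k.-1 - shifted k *m v k.

Definition Z (k : nat) : 'M[C]_(n, \sum_(j < k) r) :=
  \mxrow_(j < k) ((gam j.+1)%:C%C *: v j.+1).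

Definition S (k : nat) : 'M[C]_(n, \sum_(j < k) r) :=
  \mxrow_(j < k) s j.+1.

Definition Gam (k : nat) : 'M[C]_(\sum_(j < k) r) :=
  \mxdiag_(j < k) ((gam j.+1)%:C%C%:M : 'M[C]_r).

Definition Rtrue (k : nat) : 'M[C]_n :=
  cmx A *m Z k *m ctr (Z k) *m ctr (cmx M)
  + cmx M *m Z k *m ctr (Z k) *m ctr (cmx A) + cmx B *m ctr (cmx B).

Definition Rcomp (k : nat) : 'M[C]_n := w k *m ctr (w k).

Definition DeltaR (k : nat) : 'M[C]_n := Rtrue k - Rcomp k.

Definition eta_adi (k : nat) : 'M[C]_n :=
  if k is 0 then 0 else - (S k *m Gam k *m ctr (Z k) *m ctr (cmx M)).

Definition sig (k : nat) : R := snorm (cmx M *m invmx (shifted k)).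

End LRADI.

(* The residual gap is the Hermitian part of eta. One ADI step adds
   gamma_k^2 (A v_k (M v_k)^* + h.c.) to the true residual,
   gamma_k^2 (w_{k-1} (M v_k)^* + h.c.) + gamma_k^4 M v_k (M v_k)^* to the
   computed one and -gamma_k^2 s_k (M v_k)^* to eta; as
   s_k = w_{k-1} - A v_k - alpha_k M v_k and gamma_k^2 = -(alpha_k + conj alpha_k),
   the increments match, so DeltaR_k = eta_k + eta_k^* and
   ||DeltaR_k|| <= 2 ||eta_k||.  Since M v_k = M (A + alpha_k M)^-1 (w_{k-1} - s_k),
   ||eta_k|| <= ||eta_{k-1}|| + sigma_k gamma_k^2 ||s_k|| (||w_{k-1}|| + ||s_k||),
   and either tolerance on ||s_k|| is the positive root of the quadratic that keeps
   ||eta_k|| <= k eps / (2 jmax). *)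

From Pilot Require Import Defs.
From mathcomp Require Import all_boot all_order all_algebra.
From mathcomp Require Import complex.
From mathcomp Require Import reals classical_sets.
From mathcomp Require Import ring lra.
Set Implicit Arguments. Unset Strict Implicit. Unset Printing Implicit Defensive.
Import Order.TTheory GRing.Theory Num.Theory.
Local Open Scope ring_scope.

Section ConjugateTranspose.
Variable R : realType.
Local Notation C := (R[i]).

Lemma ctrE m p (X : 'M[C]_(m, p)) : ctr X = (map_mx conjc X)^T.
Proof. by rewrite /ctr; congr (_^T); apply: eq_map_mx => -[a b]. Qed.

Lemma ctr0 m p : ctr (0 : 'M[C]_(m, p)) = 0.
Proof. by rewrite ctrE map_mx0 linear0. Qed.

Lemma ctrD m p (X Y : 'M[C]_(m, p)) : ctr (X + Y) = ctr X + ctr Y.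
Proof. by rewrite !ctrE map_mxD linearD. Qed.

Lemma ctrN m p (X : 'M[C]_(m, p)) : ctr (- X) = - ctr X.
Proof. by rewrite !ctrE map_mxN linearN. Qed.

Lemma ctrB m p (X Y : 'M[C]_(m, p)) : ctr (X - Y) = ctr X - ctr Y.
Proof. by rewrite ctrD ctrN. Qed.

Lemma ctrZ m p a (X : 'M[C]_(m, p)) : ctr (a *: X) = conjc a *: ctr X.
Proof. by rewrite !ctrE map_mxZ linearZ. Qed.

Lemma ctrM m p q (X : 'M[C]_(m, p)) (Y : 'M[C]_(p, q)) :
  ctr (X *m Y) = ctr Y *m ctr X.
Proof. by rewrite !ctrE map_mxM trmx_mul. Qed.

Lemma ctrK m p (X : 'M[C]_(m, p)) : ctr (ctr X) = X.
Proof.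
by rewrite !ctrE map_trmx trmxK; apply/matrixP => i j; rewrite !mxE conjcK.
Qed.

Lemma ctr_mxrow m k (p_ : 'I_k -> nat) (X_ : forall j, 'M[C]_(m, p_ j)) :
  ctr (\mxrow_j X_ j) = \mxcol_j ctr (X_ j).
Proof. by apply/matrixP => i j; rewrite !mxE. Qed.

Definition herm m (X : 'M[C]_m) := X + ctr X.

Lemma hermB m (X Y : 'M[C]_m) : herm (X - Y) = herm X - herm Y.
Proof. by rewrite /herm ctrB opprD addrACA. Qed.

Lemma hermZ m (c : R) (X : 'M[C]_m) : herm (c%:C%C *: X) = c%:C%C *: herm X.
Proof. by rewrite /herm ctrZ conjc_real scalerDr. Qed.

End ConjugateTranspose.

Section EuclideanNorm.
Variable R : realType.
Local Notation C := (R[i]).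
Local Notation Re := (@complex.Re R).
Local Notation Im := (@complex.Im R).

Lemma cabs2_ge0 (z : C) : 0 <= cabs2 z.
Proof. by rewrite /cabs2 addr_ge0 ?sqr_ge0. Qed.

Lemma cabs2_eq0 (z : C) : (cabs2 z == 0) = (z == 0).
Proof.
case: z => a b; rewrite /cabs2 /= paddr_eq0 ?sqr_ge0 // !sqrf_eq0.
by rewrite eq_complex.
Qed.

Lemma cabs2M (x y : C) : cabs2 (x * y) = cabs2 x * cabs2 y.
Proof. by case: x y => [a b] [c d]; rewrite /cabs2 /=; ring. Qed.

Lemma cabs2N (x : C) : cabs2 (- x) = cabs2 x.
Proof. by case: x => a b; rewrite /cabs2 /= !sqrrN. Qed.

Lemma cabs2_real (x : R) : cabs2 x%:C%C = x ^+ 2.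
Proof. by rewrite /cabs2 /= expr0n addr0. Qed.

Definition ip p (u z : 'cV[C]_p) : R := Re ((ctr u *m z) 0 0).

Lemma ipE p (u z : 'cV[C]_p) :
  ip u z = \sum_i (Re (u i 0) * Re (z i 0) + Im (u i 0) * Im (z i 0)).
Proof.
rewrite /ip mxE (big_morph Re (op1 := +%R) (id1 := 0)) //; last by move=> [? ?] [? ?].
by apply: eq_bigr => i _; rewrite !mxE; case: (u i 0) (z i 0) => [a b] [c d] /=; ring.
Qed.

Lemma vnorm_ge0 p (u : 'cV[C]_p) : 0 <= vnorm u.
Proof. exact: sqrtr_ge0. Qed.

Lemma sqr_vnorm p (u : 'cV[C]_p) : vnorm u ^+ 2 = \sum_i cabs2 (u i 0).
Proof. by rewrite sqr_sqrtr // sumr_ge0 // => i _; apply: cabs2_ge0. Qed.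

Lemma ip_self p (u : 'cV[C]_p) : ip u u = vnorm u ^+ 2.
Proof. by rewrite ipE sqr_vnorm; apply: eq_bigr => i _; rewrite /cabs2 !expr2. Qed.

Lemma vnorm0 p : vnorm (0 : 'cV[C]_p) = 0.
Proof. by rewrite /vnorm big1 ?sqrtr0 // => i _; rewrite mxE cabs2_real expr0n. Qed.

Lemma vnorm_eq0 p (u : 'cV[C]_p) : (vnorm u == 0) = (u == 0).
Proof.
apply/idP/eqP => [|->]; last by rewrite vnorm0.
rewrite -sqrf_eq0 sqr_vnorm psumr_eq0 => [/allP u0|i _]; last exact: cabs2_ge0.
apply/matrixP => i j; rewrite ord1 mxE; apply/eqP.
by rewrite -cabs2_eq0; apply: u0; rewrite mem_index_enum.
Qed.

Lemma vnormZ p (c : C) (u : 'cV[C]_p) : vnorm (c *: u) = Num.sqrt (cabs2 c) * vnorm u.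
Proof.
rewrite /vnorm -sqrtrM ?cabs2_ge0 // mulr_sumr.
by congr Num.sqrt; apply: eq_bigr => i _; rewrite mxE cabs2M.
Qed.

Lemma vnormN p (u : 'cV[C]_p) : vnorm (- u) = vnorm u.
Proof. by congr Num.sqrt; apply: eq_bigr => i _; rewrite mxE cabs2N. Qed.

Lemma ip_le_vnorm p (u z : 'cV[C]_p) : ip u z <= vnorm u * vnorm z.
Proof.
have [->|u0] := eqVneq u 0; first by rewrite vnorm0 mul0r /ip ctr0 mul0mx mxE.
have [->|z0] := eqVneq z 0; first by rewrite vnorm0 mulr0 /ip mulmx0 mxE.
set a := vnorm u; set b := vnorm z.
have a_gt0 : 0 < a by rewrite lt0r vnorm_eq0 u0 vnorm_ge0.
have b_gt0 : 0 < b by rewrite lt0r vnorm_eq0 z0 vnorm_ge0.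
(* AM-GM termwise: [2ab x y <= b^2 x^2 + a^2 y^2] *)
have amgm : 2 * a * b * ip u z
    <= b ^+ 2 * \sum_i cabs2 (u i 0) + a ^+ 2 * \sum_i cabs2 (z i 0).
  rewrite ipE !mulr_sumr -big_split /=; apply: ler_sum => i _; rewrite /cabs2.
  set x1 := Re _; set x2 := Im _; set y1 := Re _; set y2 := Im _.
  by have := sqr_ge0 (b * x1 - a * y1); have := sqr_ge0 (b * x2 - a * y2); nra.
rewrite -!sqr_vnorm -/a -/b in amgm.
by rewrite -(ler_pM2l (_ : 0 < 2 * a * b)) ?mulr_gt0 //; apply: (le_trans amgm); nra.
Qed.

Lemma vnormD p (u z : 'cV[C]_p) : vnorm (u + z) <= vnorm u + vnorm z.
Proof.
have sqr_vnormD : vnorm (u + z) ^+ 2 = vnorm u ^+ 2 + vnorm z ^+ 2 + 2 * ip u z.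
  rewrite !sqr_vnorm ipE mulr_sumr -!big_split /=; apply: eq_bigr => i _.
  by rewrite mxE; case: (u i 0) (z i 0) => [a b] [c d]; rewrite /cabs2 /=; ring.
have := ip_le_vnorm u z; have := vnorm_ge0 (u + z).
by have := vnorm_ge0 u; have := vnorm_ge0 z; nra.
Qed.

End EuclideanNorm.

Section SpectralNorm.
Variable R : realType.
Local Notation C := (R[i]).
Local Open Scope classical_set_scope.

Lemma mulmx_col_sum m p (X : 'M[C]_(m, p)) (u : 'cV[C]_p) :
  X *m u = \sum_j u j 0 *: col j X.
Proof.
apply/matrixP => i k; rewrite ord1 !mxE summxE; apply: eq_bigr => j _.
by rewrite !mxE mulrC.
Qed.

Lemma vnorm_sum_le p I (r : seq I) (F : I -> 'cV[C]_p) :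
  vnorm (\sum_(i <- r) F i) <= \sum_(i <- r) vnorm (F i).
Proof.
elim/big_rec2: _ => [|i y x _ ih]; first by rewrite vnorm0.
exact: le_trans (vnormD _ _) (lerD _ ih).
Qed.

Lemma snorm_has_ubound m p (X : 'M[C]_(m, p)) :
  has_ubound [set vnorm (X *m u) | u in [set u : 'cV[C]_p | vnorm u <= 1]].
Proof.
exists (\sum_j vnorm (col j X)) => _ [u u_le1 <-].
rewrite mulmx_col_sum (le_trans (vnorm_sum_le _ _)) //; apply: ler_sum => j _.
rewrite vnormZ ler_piMl ?vnorm_ge0 //.
apply: le_trans u_le1; rewrite /vnorm ler_wsqrtr // (bigD1 j) //= lerDl.
by rewrite sumr_ge0 // => k _; apply: cabs2_ge0.
Qed.

Lemma vnorm_le_snorm m p (X : 'M[C]_(m, p)) u : vnorm u <= 1 -> vnorm (X *m u) <= snorm X.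
Proof. by move=> u_le1; apply: ub_le_sup (snorm_has_ubound X) _ _; exists u. Qed.

Lemma snorm_ge0 m p (X : 'M[C]_(m, p)) : 0 <= snorm X.
Proof. by apply: le_trans (vnorm_le_snorm X (u := 0) _); rewrite ?mulmx0 vnorm0. Qed.

Lemma vnorm_mulmx_le m p (X : 'M[C]_(m, p)) u : vnorm (X *m u) <= snorm X * vnorm u.
Proof.
have [->|u0] := eqVneq u 0; first by rewrite mulmx0 !vnorm0 mulr0.
have u_gt0 : 0 < vnorm u by rewrite lt0r vnorm_eq0 u0 vnorm_ge0.
have normalize x : vnorm ((vnorm u)^-1%:C%C *: x) = (vnorm u)^-1 * vnorm x.
  by rewrite vnormZ cabs2_real sqrtr_sqr ger0_norm // invr_ge0 ltW.
have := vnorm_le_snorm X (u := (vnorm u)^-1%:C%C *: u).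
by rewrite -scalemxAr !normalize mulVf ?gt_eqF // ler_pdivrMl // mulrC; apply.
Qed.

Lemma snorm_le m p (X : 'M[C]_(m, p)) c : 0 <= c ->
  (forall u, vnorm (X *m u) <= c * vnorm u) -> snorm X <= c.
Proof.
move=> c_ge0 Xc; apply: ge_sup => [|_ [u u_le1 <-]].
  by exists (vnorm (X *m 0)), 0 => //=; rewrite vnorm0.
by apply: le_trans (Xc u) _; rewrite ler_piMr.
Qed.

Lemma snorm0 m p : snorm (0 : 'M[C]_(m, p)) = 0.
Proof.
apply/eqP; rewrite eq_le snorm_ge0 andbT.
by apply: snorm_le => // u; rewrite mul0mx vnorm0 mul0r.
Qed.

Lemma snormD m p (X Y : 'M[C]_(m, p)) : snorm (X + Y) <= snorm X + snorm Y.
Proof.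
apply: snorm_le => [|u]; first by rewrite addr_ge0 ?snorm_ge0.
by rewrite mulmxDl mulrDl (le_trans (vnormD _ _)) // lerD ?vnorm_mulmx_le.
Qed.

Lemma snormM m p q (X : 'M[C]_(m, p)) (Y : 'M[C]_(p, q)) :
  snorm (X *m Y) <= snorm X * snorm Y.
Proof.
apply: snorm_le => [|u]; first by rewrite mulr_ge0 ?snorm_ge0.
rewrite -mulmxA -mulrA (le_trans (vnorm_mulmx_le _ _)) //.
by rewrite ler_wpM2l ?snorm_ge0 ?vnorm_mulmx_le.
Qed.

Lemma snormN m p (X : 'M[C]_(m, p)) : snorm (- X) = snorm X.
Proof.
have snormN_le (Y : 'M[C]_(m, p)) : snorm (- Y) <= snorm Y.
  by apply: snorm_le => [|u]; rewrite ?snorm_ge0 // mulNmx vnormN vnorm_mulmx_le.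
by apply/eqP; rewrite eq_le snormN_le -{1}(opprK X) snormN_le.
Qed.

Lemma snormZ m p (c : R) (X : 'M[C]_(m, p)) : 0 <= c ->
  snorm (c%:C%C *: X) <= c * snorm X.
Proof.
move=> c_ge0; apply: snorm_le => [|u]; first by rewrite mulr_ge0 ?snorm_ge0.
rewrite -scalemxAl vnormZ cabs2_real sqrtr_sqr ger0_norm // -mulrA.
by rewrite ler_wpM2l ?vnorm_mulmx_le.
Qed.

Lemma snorm_ctr m p (X : 'M[C]_(m, p)) : snorm (ctr X) <= snorm X.
Proof.
apply: snorm_le => [|u]; first exact: snorm_ge0.
set y := ctr X *m u.
(* [|y|^2 = Re (u^* X y) <= |u| |X y| <= |u| ||X|| |y|] *)
have y_sq : vnorm y ^+ 2 <= snorm X * vnorm u * vnorm y.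
  rewrite -ip_self {1}/ip {1}/y ctrM ctrK -mulmxA -/(ip u (X *m y)).
  apply: le_trans (ip_le_vnorm _ _) _.
  by rewrite mulrAC [leLHS]mulrC ler_wpM2r ?vnorm_ge0 ?vnorm_mulmx_le.
have [y0|y_neq0] := eqVneq (vnorm y) 0; first by rewrite y0 mulr_ge0 ?snorm_ge0 ?vnorm_ge0.
by rewrite -(ler_pM2r (_ : 0 < vnorm y)) ?lt0r ?y_neq0 ?vnorm_ge0 // -expr2.
Qed.

Lemma snorm_herm m (X : 'M[C]_m) : snorm (herm X) <= 2 * snorm X.
Proof. by rewrite mulr2n mulrDl mul1r (le_trans (snormD _ _)) ?lerD ?snorm_ctr. Qed.

End SpectralNorm.

Section ResidualGap.
Variable R : realType.
Local Notation C := (R[i]).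
Variables (n r : nat) (A M : 'M[R]_n) (B : 'M[R]_(n, r)) (alpha : nat -> C)
  (v : nat -> 'M[C]_(n, r)).

Local Notation cA := (cmx A).
Local Notation cM := (cmx M).
Local Notation g k := ((gam alpha k ^+ 2)%:C)%C.
Local Notation u k := (cM *m v k).
Local Notation w := (w M B alpha v).
Local Notation s := (s A M B alpha v).
Local Notation eta := (eta_adi A M B alpha v).
Local Notation DeltaR := (DeltaR A M B alpha v).

Lemma gam_sqr k : complex.Re (alpha k) <= 0 -> g k = - (alpha k + conjc (alpha k)).
Proof.
move=> Re_le0; rewrite addcJ /gam sqr_sqrtr ?mulNr ?oppr_ge0 ?mulr_ge0_le0 //.
by rewrite rmorphN rmorphM /= rmorph_nat.
Qed.

Lemma Z_ctrZ k :
  Z alpha v k *m ctr (Z alpha v k) = \sum_(j < k) g j.+1 *: (v j.+1 *m ctr (v j.+1)).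
Proof.
rewrite /Z ctr_mxrow mul_mxrow_mxcol; apply: eq_bigr => j _.
by rewrite ctrZ conjc_real -scalemxAl -scalemxAr scalerA -rmorphM expr2.
Qed.

Lemma S_Gam_ctrZ k : S A M B alpha v k *m Gam r alpha k *m ctr (Z alpha v k)
  = \sum_(j < k) g j.+1 *: (s j.+1 *m ctr (v j.+1)).
Proof.
rewrite /S /Gam /Z mul_mxrow_mxdiag ctr_mxrow mul_mxrow_mxcol; apply: eq_bigr => j _.
by rewrite ctrZ conjc_real mul_mx_scalar -scalemxAl -scalemxAr scalerA -rmorphM expr2.
Qed.

Lemma s_succ k : s k.+1 = w k - cA *m v k.+1 - alpha k.+1 *: u k.+1.
Proof. by rewrite /s /shifted mulmxDl -scalemxAl opprD addrA. Qed.

Lemma Rtrue_succ k : Rtrue A M B alpha v k.+1 = Rtrue A M B alpha v k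
  + g k.+1 *: herm (cA *m v k.+1 *m ctr (u k.+1)).
Proof.
rewrite /Rtrue /herm -!(mulmxA _ (Z _ _ _)) !Z_ctrZ big_ord_recr /=.
rewrite !mulmxDr !mulmxDl !ctrM !ctrK -!scalemxAr -!scalemxAl !mulmxA scalerDr.
by rewrite !addrA (ACl (1*3*5*2*4))%AC.
Qed.

Lemma Rcomp_succ k : Rcomp M B alpha v k.+1 = Rcomp M B alpha v k
  + (g k.+1 *: herm (w k *m ctr (u k.+1)) + (g k.+1 * g k.+1) *: (u k.+1 *m ctr (u k.+1))).
Proof.
rewrite /Rcomp /herm /= (ctrM (w k)) ctrK ctrD ctrZ conjc_real !mulmxDr !mulmxDl.
rewrite -!scalemxAr -!scalemxAl scalerA scalerDr !addrA.
by rewrite (ACl (1*3*2*4))%AC.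
Qed.

Lemma eta_succ k : eta k.+1 = eta k - g k.+1 *: (s k.+1 *m ctr (u k.+1)).
Proof.
have eta_sum j : eta j = - ((\sum_(i < j) g i.+1 *: (s i.+1 *m ctr (v i.+1))) *m ctr cM).
  by case: j => [|j]; rewrite /eta_adi ?S_Gam_ctrZ // big_ord0 mul0mx oppr0.
by rewrite !eta_sum big_ord_recr /= mulmxDl opprD -scalemxAl ctrM mulmxA.
Qed.

Lemma herm_s_succ k : complex.Re (alpha k.+1) <= 0 ->
  herm (s k.+1 *m ctr (u k.+1))
  = herm (w k *m ctr (u k.+1)) - herm (cA *m v k.+1 *m ctr (u k.+1))
    + g k.+1 *: (u k.+1 *m ctr (u k.+1)).
Proof.
move=> Re_le0; rewrite s_succ !mulmxBl !hermB -scalemxAl gam_sqr // scaleNr.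
by congr (_ - _); rewrite /herm ctrZ (ctrM _ (ctr _)) ctrK scalerDl.
Qed.

Lemma DeltaR_succ k : complex.Re (alpha k.+1) <= 0 ->
  DeltaR k.+1 = DeltaR k - g k.+1 *: herm (s k.+1 *m ctr (u k.+1)).
Proof.
move=> Re_le0; rewrite /DeltaR /Defs.DeltaR Rtrue_succ Rcomp_succ herm_s_succ //.
rewrite opprD addrACA; congr (_ + _).
by rewrite [in RHS]scalerDr scalerBr scalerA [in RHS]opprD opprB [in LHS]opprD addrA.
Qed.

Lemma DeltaR_eta k : (forall j, (j < k)%N -> complex.Re (alpha j.+1) <= 0) ->
  DeltaR k = herm (eta k).
Proof.
elim: k => [_|k IH Re_le0].
  rewrite /DeltaR /Defs.DeltaR /Rtrue -!(mulmxA _ (Z _ _ _)) Z_ctrZ big_ord0.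
  rewrite /Rcomp /eta_adi /herm ctr0 addr0.
  by rewrite !mulmx0 !mul0mx !add0r subrr.
rewrite DeltaR_succ ?Re_le0 // IH => [|j lt_jk]; last by rewrite Re_le0 // ltnW.
by rewrite eta_succ hermB hermZ.
Qed.

End ResidualGap.

Section EtaGrowth.
Variable R : realType.
Variables (n r : nat) (A M : 'M[R]_n) (B : 'M[R]_(n, r)) (alpha : nat -> R[i])
  (v : nat -> 'M[R[i]]_(n, r)).

Local Notation w := (w M B alpha v).
Local Notation s := (s A M B alpha v).
Local Notation eta := (eta_adi A M B alpha v).

Lemma Mv_solve k : shifted A M alpha k.+1 \in unitmx ->
  cmx M *m v k.+1 = cmx M *m invmx (shifted A M alpha k.+1) *m (w k - s k.+1).
Proof. by move=> shift_unit; rewrite /s subKr -mulmxA mulKmx. Qed.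

Lemma snorm_eta_succ k : shifted A M alpha k.+1 \in unitmx ->
  snorm (eta k.+1) <= snorm (eta k) + sig A M alpha k.+1 * gam alpha k.+1 ^+ 2
                                      * (snorm (s k.+1) * (snorm (w k) + snorm (s k.+1))).
Proof.
move=> shift_unit; rewrite /sig.
have Mv_le : snorm (cmx M *m v k.+1)
    <= snorm (cmx M *m invmx (shifted A M alpha k.+1)) * (snorm (w k) + snorm (s k.+1)).
  rewrite Mv_solve //; apply: le_trans (snormM _ _) _; apply: ler_wpM2l.
    exact: snorm_ge0.
  by apply: le_trans (snormD _ _) _; rewrite snormN.
have su_le : snorm (s k.+1 *m ctr (cmx M *m v k.+1))
    <= snorm (cmx M *m invmx (shifted A M alpha k.+1))
       * (snorm (s k.+1) * (snorm (w k) + snorm (s k.+1))).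
  apply: le_trans (snormM _ _) _; rewrite mulrCA; apply: ler_wpM2l; first exact: snorm_ge0.
  exact: le_trans (snorm_ctr _) Mv_le.
rewrite eta_succ; apply: le_trans (snormD _ _) _; rewrite lerD2l snormN.
apply: le_trans (snormZ _ (sqr_ge0 _)) _.
apply: le_trans (ler_wpM2l (sqr_ge0 _) su_le) _.
by rewrite mulrCA mulrA.
Qed.

End EtaGrowth.

Section ToleranceRecursion.
Variable R : realType.

(* No condition on [a]: for [a = 0] the left side is [0 * (z / 0) = 0]. *)
Lemma mul_div_le (a z : R) : 0 <= z -> a * (z / a) <= z.
Proof. by have [->|a_neq0] := eqVneq a 0; rewrite ?mul0r // mulrC divfK. Qed.

Lemma mul_addr_le_of_root (w s y : R) : 0 <= w -> 0 <= s -> 0 <= y ->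
  s <= 2^-1 * (Num.sqrt (w ^+ 2 + y) - w) -> s * (w + s) <= y / 4.
Proof.
move=> w_ge0 s_ge0 y_ge0 s_le.
have root_ge : 2 * s + w <= Num.sqrt (w ^+ 2 + y) by lra.
have sq_le : (2 * s + w) ^+ 2 <= w ^+ 2 + y.
  rewrite -[leRHS]sqr_sqrtr ?addr_ge0 ?sqr_ge0 //.
  by rewrite ler_sqr ?nnegrE ?sqrtr_ge0 ?addr_ge0 ?mulr_ge0.
nra.
Qed.

Variables (N : nat) (eps : R) (e wn sn a : nat -> R).
Hypotheses (N_gt0 : (0 < N)%N) (eps_ge0 : 0 <= eps) (e0 : e 0 = 0).
Hypotheses (wn_ge0 : forall k, 0 <= wn k) (sn_ge0 : forall k, 0 <= sn k).
Hypothesis a_ge0 : forall k, 0 <= a k.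
Hypothesis e_succ : forall k, (k < N)%N ->
  e k.+1 <= e k + a k.+1 * (sn k.+1 * (wn k + sn k.+1)).

Let c := eps / (2 * N%:R).

Let c_ge0 : 0 <= c.
Proof. by rewrite divr_ge0 ?mulr_ge0 ?ler0n. Qed.

Lemma budget_le_half_eps :
  (forall k, (k < N)%N -> e k <= k%:R * c -> e k.+1 <= k.+1%:R * c) -> e N <= eps / 2.
Proof.
move=> e_step; have e_le k : (k <= N)%N -> e k <= k%:R * c.
  by elim: k => [|k IH] k_le; rewrite ?e0 ?mul0r // e_step // IH // ltnW.
have -> : eps / 2 = N%:R * c by rewrite /c; field; rewrite pnatr_eq0 -lt0n N_gt0.
exact: e_le.
Qed.

Lemma uniform_tolerance :
  (forall k, (1 <= k <= N)%N ->
     sn k <= 2^-1 * (Num.sqrt (wn k.-1 ^+ 2 + 2 * eps / (a k * N%:R)) - wn k.-1)) ->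
  e N <= eps / 2.
Proof.
move=> sn_le; apply: budget_le_half_eps => k lt_kN e_le.
have incr_le : a k.+1 * (sn k.+1 * (wn k + sn k.+1)) <= c.
  have y_ge0 : 0 <= 2 * eps / N%:R / a k.+1 by rewrite !divr_ge0 ?mulr_ge0.
  have sn_le_k := sn_le k.+1 lt_kN; rewrite /= invfM mulrA mulrAC in sn_le_k.
  have root_le := mul_addr_le_of_root (wn_ge0 k) (sn_ge0 _) y_ge0 sn_le_k.
  have c_eq : c = 2 * eps / N%:R / 4 by rewrite /c; field; rewrite pnatr_eq0 -lt0n N_gt0.
  apply: le_trans (ler_wpM2l (a_ge0 _) root_le) _.
  by rewrite mulrA c_eq ler_wpM2r ?invr_ge0 ?ler0n ?mul_div_le ?divr_ge0 ?mulr_ge0.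
by rewrite (le_trans (e_succ lt_kN)) // -natr1 mulrDl mul1r lerD.
Qed.

Lemma adaptive_tolerance :
  (forall k, (1 <= k <= N)%N ->
     sn k <= 2^-1 * (Num.sqrt (wn k.-1 ^+ 2
               + (k%:R * eps / N%:R - 2 * e k.-1) * (2 / a k)) - wn k.-1)) ->
  e N <= eps / 2.
Proof.
move=> sn_le; apply: budget_le_half_eps => k lt_kN e_le.
set x := k.+1%:R * eps / N%:R - 2 * e k.
have x_eq : x = 2 * (k.+1%:R * c) - 2 * e k.
  by rewrite /x /c; congr (_ - _); field; rewrite pnatr_eq0 -lt0n N_gt0.
have x_ge0 : 0 <= x by rewrite x_eq -natr1 mulrDl mul1r; have := c_ge0; lra.
have y_ge0 : 0 <= x * 2 / a k.+1 by rewrite !divr_ge0 ?mulr_ge0.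
have sn_le_k := sn_le k.+1 lt_kN; rewrite /= -/x mulrA in sn_le_k.
have root_le := mul_addr_le_of_root (wn_ge0 k) (sn_ge0 _) y_ge0 sn_le_k.
have incr_le : a k.+1 * (sn k.+1 * (wn k + sn k.+1)) <= x / 2.
  apply: le_trans (ler_wpM2l (a_ge0 _) root_le) _.
  rewrite mulrA (le_trans (ler_wpM2r _ (mul_div_le _ _))) ?invr_ge0 ?ler0n ?mulr_ge0 //.
  lra.
by rewrite (le_trans (e_succ lt_kN)) //; lra.
Qed.

End ToleranceRecursion.

Unset Implicit Arguments.

Theorem theorem3p6 (R : realType) (n r : nat) (A M : 'M[R]_n) (B : 'M[R]_(n, r))
  (jmax : nat) (alpha : nat -> R[i]) (v : nat -> 'M[R[i]]_(n, r)) (eps : R) :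
  M \in unitmx ->
  (1 <= jmax)%N ->
  (forall k, (1 <= k <= jmax)%N ->
     complex.Re (alpha k) < 0 /\ shifted A M alpha k \in unitmx) ->
  0 < eps < 1 ->
  let gamma := gam alpha in
  let wn k := snorm (w M B alpha v k) in
  let sn k := snorm (s A M B alpha v k) in
  let sigma := sig A M alpha in
  let DR := snorm (DeltaR A M B alpha v jmax) in
  ((forall k, (1 <= k <= jmax)%N ->
      sn k <= 2^-1 * (Num.sqrt (wn k.-1 ^+ 2
                 + 2 * eps / (sigma k * gamma k ^+ 2 * jmax%:R)) - wn k.-1)) ->
   DR <= eps)
  /\
  ((forall k, (1 <= k <= jmax)%N ->
      sn k <= 2^-1 * (Num.sqrt (wn k.-1 ^+ 2
                 + (k%:R * eps / jmax%:R
                    - 2 * snorm (eta_adi A M B alpha v k.-1))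
                   * (2 / (sigma k * gamma k ^+ 2))) - wn k.-1)) ->
   DR <= eps).
Proof.
move=> _ jmax_gt0 shift_ok /andP[eps_gt0 _] gamma wn sn sigma DR.
pose e k := snorm (eta_adi A M B alpha v k).
have DR_le : DR <= 2 * e jmax.
  rewrite /DR DeltaR_eta ?snorm_herm // => j lt_j.
  by have [/ltW] := shift_ok j.+1 lt_j.
have e_succ k : (k < jmax)%N ->
    e k.+1 <= e k + sigma k.+1 * gamma k.+1 ^+ 2 * (sn k.+1 * (wn k + sn k.+1)).
  by move=> lt_k; have [_ /snorm_eta_succ] := shift_ok k.+1 lt_k; apply.
have e0 : e 0%N = 0 by rewrite /e /eta_adi snorm0.
have a_ge0 k : 0 <= sigma k * gamma k ^+ 2 by rewrite mulr_ge0 ?snorm_ge0 ?sqr_ge0.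
have [wn_ge0 sn_ge0] : (forall k, 0 <= wn k) /\ (forall k, 0 <= sn k).
  by split=> k; apply: snorm_ge0.
split=> tol.
- have := uniform_tolerance jmax_gt0 (ltW eps_gt0) e0 wn_ge0 sn_ge0 a_ge0 e_succ tol.
  lra.
- have := adaptive_tolerance jmax_gt0 (ltW eps_gt0) e0 wn_ge0 sn_ge0 a_ge0 e_succ tol.
  lra.
Qed.
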